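(* Let $\mathcal{C}$ be a peircean bicategory. Then the functor $\mathcal{C}[-,I]:\mathsf{Map}(\mathcal{C})^{op}\to\mathsf{InfSl}$, sending an object $X$ to $\mathcal{C}[X,I]$ and a map $f:X\to Y$ to $c\mapsto f;c$, is a boolean hyperdoctrine.
   Context: Composition in diagrammatic order. A cartesian bicategory is a poset-enriched symmetric monoidal category $(\mathcal{C},\otimes,I)$ with, for each $X$, a commutative comonoid $(\mathrm{copy}_X:X\to X\otimes X,\mathrm{disc}_X:X\to I)$ and commutative monoid $(\mathrm{cocopy}_X,\mathrm{codisc}_X)$, such that every arrow $c:X\to Y$ satisfies $c;\mathrm{copy}_Y\le\mathrm{copy}_X;(c\otimes c)$, $c;\mathrm{disc}_Y\le\mathrm{disc}_X$; $\mathrm{id}_X\le\mathrm{copy}_X;\mathrm{cocopy}_X$, $\mathrm{cocopy}_X;\mathrm{copy}_X\le\mathrm{id}$, $\mathrm{id}_X\le\mathrm{disc}_X;\mathrm{codisc}_X$, $\mathrm{codisc}_X;\mathrm{disc}_X\le\mathrm{id}_I$; the monoid and comonoid form special Frobenius bimonoids; and the standard coherence conditions hold. A map is an arrow $f:X\to Y$ with $\mathrm{copy}_X;(f\otimes f)\le f;\mathrm{copy}_Y$ and $\mathrm{disc}_X\le f;\mathrm{disc}_Y$; maps form a category $\mathsf{Map}(\mathcal{C})$ with finite products. A peircean bicategory is a cartesian bicategory whose homsets carry Boolean algebra structures (with the given order) such that $f;\neg c=\neg(f;c)$ for every map $f:X\to Y$ and arrow $c:Y\to Z$. $\mathsf{InfSl}$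 is the category of inf-semilattices. An elementary and existential doctrine is a functor $P:\mathcal{C}^{op}\to\mathsf{InfSl}$, $\mathcal{C}$ with finite products, such that: for each $Y$ there is $\delta_Y\in P(Y\times Y)$ with, for every $X$, the assignment $\alpha\mapsto P_{\langle\pi_1,\pi_2\rangle}(\alpha)\wedge P_{\langle\pi_2,\pi_3\rangle}(\delta_Y)$ left adjoint to $P_{\mathrm{id}_X\times\Delta_Y}:P(X\times Y\times Y)\to P(X\times Y)$; and for each projection $\pi_X:X\times Y\to X$, $P_{\pi_X}$ has a left adjoint $\exists_{\pi_X}$ satisfying the Beck–Chevalley condition and Frobenius reciprocity. A boolean hyperdoctrine is an elementary and existential doctrine such that each $P(X)$ is a Boolean algebra and each $P_f$ is a homomorphism of Boolean algebras. *)

(* Composition is written in DIAGRAMMATIC order:  f >> g  means  "f ; g". *)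

Set Implicit Arguments.
Unset Strict Implicit.

Record BoolOps (T : Type) : Type := {
  btop : T; bbot : T;
  bmeet : T -> T -> T; bjoin : T -> T -> T;
  bneg : T -> T }.

Definition is_boolean (T : Type) (le : T -> T -> Prop) (B : BoolOps T) : Prop :=
  (forall x, le x x) /\
  (forall x y z, le x y -> le y z -> le x z) /\
  (forall x y, le x y -> le y x -> x = y) /\
  (forall x, le x (btop B)) /\
  (forall x, le (bbot B) x) /\
  (forall x y z, le z (bmeet B x y) <-> (le z x /\ le z y)) /\
  (forall x y z, le (bjoin B x y) z <-> (le x z /\ le y z)) /\
  (forall x y z, bmeet B x (bjoin B y z) = bjoin B (bmeet B x y) (bmeet B x z)) /\
  (forall x, bmeet B x (bneg B x) = bbot B) /\
  (forall x, bjoin B x (bneg B x) = btop B).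

Record SMPData : Type := {
  ob : Type;
  hom : ob -> ob -> Type;
  hle : forall X Y, hom X Y -> hom X Y -> Prop;
  idm : forall X, hom X X;
  cmp : forall X Y Z, hom X Y -> hom Y Z -> hom X Z;
  tens : ob -> ob -> ob;
  unit : ob;
  tensm : forall X X' Y Y', hom X X' -> hom Y Y' -> hom (tens X Y) (tens X' Y');
  assoc : forall X Y Z, hom (tens (tens X Y) Z) (tens X (tens Y Z));
  assoc_inv : forall X Y Z, hom (tens X (tens Y Z)) (tens (tens X Y) Z);
  lunit : forall X, hom (tens unit X) X;
  lunit_inv : forall X, hom X (tens unit X);
  runit : forall X, hom (tens X unit) X;
  runit_inv : forall X, hom X (tens X unit);
  sym : forall X Y, hom (tens X Y) (tens Y X) }.

Arguments hom {_} _ _.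
Arguments hle {_ _ _} _ _.
Arguments idm {_} _.
Arguments cmp {_ _ _ _} _ _.
Arguments tens {_} _ _.
Arguments unit {_}.
Arguments tensm {_ _ _ _ _} _ _.
Arguments assoc {_} _ _ _.
Arguments assoc_inv {_} _ _ _.
Arguments lunit {_} _.
Arguments lunit_inv {_} _.
Arguments runit {_} _.
Arguments runit_inv {_} _.
Arguments sym {_} _ _.

Declare Scope pcat_scope.
Infix ">>" := cmp (at level 55, left associativity) : pcat_scope.
Infix "**" := tensm (at level 40, left associativity) : pcat_scope.
Open Scope pcat_scope.

Section SMPLaws.
Variable C : SMPData.
Implicit Types (X Y Z W : ob C).

Record is_SMPCat : Prop := {
  le_refl : forall X Y (f : hom X Y), hle f f;
  le_trans : forall X Y (f g h : hom X Y), hle f g -> hle g h -> hle f h;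
  le_antisym : forall X Y (f g : hom X Y), hle f g -> hle g f -> f = g;
  cmp_mono : forall X Y Z (f f' : hom X Y) (g g' : hom Y Z),
      hle f f' -> hle g g' -> hle (f >> g) (f' >> g');
  id_l : forall X Y (f : hom X Y), idm X >> f = f;
  id_r : forall X Y (f : hom X Y), f >> idm Y = f;
  cmp_assoc : forall X Y Z W (f : hom X Y) (g : hom Y Z) (h : hom Z W),
      (f >> g) >> h = f >> (g >> h);
  tens_mono : forall X X' Y Y' (f f' : hom X X') (g g' : hom Y Y'),
      hle f f' -> hle g g' -> hle (f ** g) (f' ** g');
  tens_id : forall X Y, idm X ** idm Y = idm (tens X Y);
  tens_cmp : forall X X' X'' Y Y' Y'' (f : hom X X') (f' : hom X' X'')
      (g : hom Y Y') (g' : hom Y' Y''),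
      (f >> f') ** (g >> g') = (f ** g) >> (f' ** g');
  assoc_iso1 : forall X Y Z, assoc X Y Z >> assoc_inv X Y Z = idm _;
  assoc_iso2 : forall X Y Z, assoc_inv X Y Z >> assoc X Y Z = idm _;
  lunit_iso1 : forall X, lunit X >> lunit_inv X = idm _;
  lunit_iso2 : forall X, lunit_inv X >> lunit X = idm _;
  runit_iso1 : forall X, runit X >> runit_inv X = idm _;
  runit_iso2 : forall X, runit_inv X >> runit X = idm _;
  sym_inv : forall X Y, sym X Y >> sym Y X = idm _;
  assoc_nat : forall X X' Y Y' Z Z' (f : hom X X') (g : hom Y Y') (h : hom Z Z'),
      ((f ** g) ** h) >> assoc X' Y' Z' = assoc X Y Z >> (f ** (g ** h));
  lunit_nat : forall X X' (f : hom X X'),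
      (idm unit ** f) >> lunit X' = lunit X >> f;
  runit_nat : forall X X' (f : hom X X'),
      (f ** idm unit) >> runit X' = runit X >> f;
  sym_nat : forall X X' Y Y' (f : hom X X') (g : hom Y Y'),
      (f ** g) >> sym X' Y' = sym X Y >> (g ** f);
  pentagon : forall W X Y Z,
      (assoc W X Y ** idm Z) >> assoc W (tens X Y) Z >> (idm W ** assoc X Y Z)
      = assoc (tens W X) Y Z >> assoc W X (tens Y Z);
  triangle : forall X Y,
      assoc X unit Y >> (idm X ** lunit Y) = runit X ** idm Y;
  hexagon : forall X Y Z,
      assoc X Y Z >> sym X (tens Y Z) >> assoc Y Z X
      = (sym X Y ** idm Z) >> assoc Y X Z >> (idm Y ** sym X Z) }.

End SMPLaws.

Definition mid (C : SMPData) (X Y Z W : ob C) :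
    hom (tens (tens X Y) (tens Z W)) (tens (tens X Z) (tens Y W)) :=
  assoc X Y (tens Z W)
  >> (idm X ** assoc_inv Y Z W)
  >> (idm X ** (sym Y Z ** idm W))
  >> (idm X ** assoc Z Y W)
  >> assoc_inv X Z (tens Y W).

Record CBData : Type := {
  cbC :> SMPData;
  copy : forall X : ob cbC, hom X (tens X X);
  disc : forall X : ob cbC, hom X unit;
  cocopy : forall X : ob cbC, hom (tens X X) X;
  codisc : forall X : ob cbC, hom unit X }.

Arguments copy {_} _.
Arguments disc {_} _.
Arguments cocopy {_} _.
Arguments codisc {_} _.

Record is_CartBicat (C : CBData) : Prop := {
  copy_assoc : forall X : ob C,
      copy X >> (copy X ** idm X) >> assoc X X X = copy X >> (idm X ** copy X);
  copy_unit_l : forall X : ob C, copy X >> (disc X ** idm X) >> lunit X = idm X;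
  copy_unit_r : forall X : ob C, copy X >> (idm X ** disc X) >> runit X = idm X;
  copy_comm : forall X : ob C, copy X >> sym X X = copy X;
  cocopy_assoc : forall X : ob C,
      assoc X X X >> (idm X ** cocopy X) >> cocopy X = (cocopy X ** idm X) >> cocopy X;
  cocopy_unit_l : forall X : ob C,
      lunit_inv X >> (codisc X ** idm X) >> cocopy X = idm X;
  cocopy_unit_r : forall X : ob C,
      runit_inv X >> (idm X ** codisc X) >> cocopy X = idm X;
  cocopy_comm : forall X : ob C, sym X X >> cocopy X = cocopy X;
  frobenius_l : forall X : ob C,
      (copy X ** idm X) >> assoc X X X >> (idm X ** cocopy X) = cocopy X >> copy X;
  frobenius_r : forall X : ob C,
      (idm X ** copy X) >> assoc_inv X X X >> (cocopy X ** idm X) = cocopy X >> copy X;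
  special : forall X : ob C, copy X >> cocopy X = idm X;
  copy_tens : forall X Y : ob C, copy (tens X Y) = (copy X ** copy Y) >> mid X X Y Y;
  disc_tens : forall X Y : ob C, disc (tens X Y) = (disc X ** disc Y) >> lunit unit;
  copy_unit : copy (@unit C) = lunit_inv unit;
  disc_unitob : disc (@unit C) = idm unit;
  cocopy_tens : forall X Y : ob C,
      cocopy (tens X Y) = mid X Y X Y >> (cocopy X ** cocopy Y);
  codisc_tens : forall X Y : ob C,
      codisc (tens X Y) = lunit_inv unit >> (codisc X ** codisc Y);
  cocopy_unit : cocopy (@unit C) = lunit unit;
  codisc_unitob : codisc (@unit C) = idm unit;
  copy_lax : forall (X Y : ob C) (c : hom X Y), hle (c >> copy Y) (copy X >> (c ** c));
  disc_lax : forall (X Y : ob C) (c : hom X Y), hle (c >> disc Y) (disc X);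
  copy_adj1 : forall X : ob C, hle (idm X) (copy X >> cocopy X);
  copy_adj2 : forall X : ob C, hle (cocopy X >> copy X) (idm (tens X X));
  disc_adj1 : forall X : ob C, hle (idm X) (disc X >> codisc X);
  disc_adj2 : forall X : ob C, hle (codisc X >> disc X) (idm unit) }.

Definition is_map (C : CBData) (X Y : ob C) (f : hom X Y) : Prop :=
  hle (copy X >> (f ** f)) (f >> copy Y) /\ hle (disc X) (f >> disc Y).

Record PBData : Type := {
  pbC :> CBData;
  bops : forall X Y : ob pbC, BoolOps (hom X Y) }.

Arguments bops {_} _ _.

Definition is_peircean (C : PBData) : Prop :=
  (forall X Y : ob C, is_boolean (@hle C X Y) (bops X Y)) /\
  (forall (X Y Z : ob C) (f : hom X Y) (c : hom Y Z),
      is_map f -> f >> bneg (bops Y Z) c = bneg (bops X Z) (f >> c)).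

Record PeirceanBicat : Type := {
  pb_data :> PBData;
  pb_smc : is_SMPCat pb_data;
  pb_cb : is_CartBicat pb_data;
  pb_peirce : is_peircean pb_data }.

(** * Categories with (chosen) finite products, presented as a class of
      arrows [farr] inside ambient hom-types (so that Map(C) can be given
      as the arrows of C satisfying [is_map]). *)

Record FPData : Type := {
  fob : Type;
  fhom : fob -> fob -> Type;
  farr : forall X Y, fhom X Y -> Prop;
  fid : forall X, fhom X X;
  fcmp : forall X Y Z, fhom X Y -> fhom Y Z -> fhom X Z;
  fprod : fob -> fob -> fob;
  ffst : forall X Y, fhom (fprod X Y) X;
  fsnd : forall X Y, fhom (fprod X Y) Y;
  fpair : forall Z X Y, fhom Z X -> fhom Z Y -> fhom Z (fprod X Y);
  fterm : fob;
  fbang : forall X, fhom X fterm }.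

Arguments fhom {_} _ _.
Arguments farr {_ _ _} _.
Arguments fid {_} _.
Arguments fcmp {_ _ _ _} _ _.
Arguments fprod {_} _ _.
Arguments ffst {_} _ _.
Arguments fsnd {_} _ _.
Arguments fpair {_ _ _ _} _ _.
Arguments fterm {_}.
Arguments fbang {_} _.

Definition is_fp_cat (D : FPData) : Prop :=
  (forall X : fob D, farr (fid X)) /\
  (forall (X Y Z : fob D) (f : fhom X Y) (g : fhom Y Z), farr f -> farr g -> farr (fcmp f g)) /\
  (forall (X Y : fob D) (f : fhom X Y), farr f -> fcmp (fid X) f = f /\ fcmp f (fid Y) = f) /\
  (forall (X Y Z W : fob D) (f : fhom X Y) (g : fhom Y Z) (h : fhom Z W),
      farr f -> farr g -> farr h -> fcmp (fcmp f g) h = fcmp f (fcmp g h)) /\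
  (forall X Y : fob D, farr (ffst X Y) /\ farr (fsnd X Y)) /\
  (forall (Z X Y : fob D) (f : fhom Z X) (g : fhom Z Y), farr f -> farr g ->
      farr (fpair f g) /\ fcmp (fpair f g) (ffst X Y) = f
      /\ fcmp (fpair f g) (fsnd X Y) = g) /\
  (forall (Z X Y : fob D) (h : fhom Z (fprod X Y)), farr h ->
      h = fpair (fcmp h (ffst X Y)) (fcmp h (fsnd X Y))) /\
  (forall X : fob D, farr (fbang X)) /\
  (forall (X : fob D) (h : fhom X fterm), farr h -> h = fbang X).

(** * Doctrines  P : D^op -> InfSl  (fibres carry Boolean operations; only
      top and meet are used for the InfSl / elementary / existential parts). *)

Record DocData (D : FPData) : Type := {
  pob : fob D -> Type;
  ple : forall X, pob X -> pob X -> Prop;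
  pops : forall X, BoolOps (pob X);
  pact : forall X Y, fhom X Y -> pob Y -> pob X }.

Arguments ple {_ _ _} _ _.
Arguments pact {_ _ _ _} _ _.

Section Doctrine.
Variables (D : FPData) (P : DocData D).
Local Unset Implicit Arguments.

Let top X := btop (pops P X).
Let meet X := bmeet (pops P X).

Definition is_infsl_functor : Prop :=
  (forall X, (forall a : pob P X, ple a a) /\
             (forall a b c : pob P X, ple a b -> ple b c -> ple a c) /\
             (forall a b : pob P X, ple a b -> ple b a -> a = b) /\
             (forall a : pob P X, ple a (top X)) /\
             (forall a b c : pob P X, ple c (meet X a b) <-> (ple c a /\ ple c b))) /\
  (forall X Y (f : fhom X Y), farr f ->
      pact f (top Y) = top X /\
      (forall a b, pact f (meet Y a b) = meet X (pact f a) (pact f b))) /\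
  (forall X (a : pob P X), pact (fid X) a = a) /\
  (forall X Y Z (f : fhom X Y) (g : fhom Y Z) (a : pob P Z), farr f -> farr g ->
      pact (fcmp f g) a = pact f (pact g a)).

(* elementary: X x Y x Y is taken as (X x Y) x Y *)
Definition is_elementary : Prop :=
  forall Y, exists delta : pob P (fprod Y Y),
    forall X (a : pob P (fprod X Y)) (b : pob P (fprod (fprod X Y) Y)),
      ple (meet _ (pact (ffst (fprod X Y) Y) a)
                  (pact (fpair (fcmp (ffst (fprod X Y) Y) (fsnd X Y))
                               (fsnd (fprod X Y) Y)) delta)) b
      <-> ple a (pact (fpair (fid (fprod X Y)) (fsnd X Y)) b).

Definition is_existential : Prop :=
  exists E : forall X Y, pob P (fprod X Y) -> pob P X,
    forall X Y,
      (forall (a : pob P (fprod X Y)) (b : pob P X),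
          ple (E X Y a) b <-> ple a (pact (ffst X Y) b)) /\
      (forall (a : pob P (fprod X Y)) (b : pob P X),
          E X Y (meet _ a (pact (ffst X Y) b)) = meet _ (E X Y a) b) /\
      (forall X' (f : fhom X' X) (a : pob P (fprod X Y)), farr f ->
          pact f (E X Y a) = E X' Y (pact (fpair (fcmp (ffst X' Y) f) (fsnd X' Y)) a)).

Definition is_boolean_doctrine : Prop :=
  (forall X, is_boolean (@ple D P X) (pops P X)) /\
  (forall X Y (f : fhom X Y), farr f ->
      pact f (btop (pops P Y)) = btop (pops P X) /\
      pact f (bbot (pops P Y)) = bbot (pops P X) /\
      (forall a b, pact f (bmeet (pops P Y) a b) = bmeet (pops P X) (pact f a) (pact f b)) /\
      (forall a b, pact f (bjoin (pops P Y) a b) = bjoin (pops P X) (pact f a) (pact f b)) /\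
      (forall a, pact f (bneg (pops P Y) a) = bneg (pops P X) (pact f a))).

Definition is_boolean_hyperdoctrine : Prop :=
  is_fp_cat D /\ is_infsl_functor /\ is_elementary /\ is_existential
  /\ is_boolean_doctrine.

End Doctrine.

Arguments is_infsl_functor {D} P.
Arguments is_elementary {D} P.
Arguments is_existential {D} P.
Arguments is_boolean_doctrine {D} P.
Arguments is_boolean_hyperdoctrine {D} P.

Definition MapFP (C : PBData) : FPData := {|
  fob := ob C;
  fhom := @hom C;
  farr := fun X Y f => @is_map C X Y f;
  fid := @idm C;
  fcmp := fun X Y Z f g => f >> g;
  fprod := @tens C;
  ffst := fun X Y => (idm X ** disc Y) >> runit X;
  fsnd := fun X Y => (disc X ** idm Y) >> lunit Y;
  fpair := fun Z X Y f g => copy Z >> (f ** g);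
  fterm := @unit C;
  fbang := @disc C |}.

Definition HomIDoc (C : PBData) : DocData (MapFP C) :=
  @Build_DocData (MapFP C)
    (fun X : ob C => @hom C X (@unit C))
    (fun X : ob C => @hle C X (@unit C))
    (fun X : ob C => @bops C X (@unit C))
    (fun (X Y : ob C) (f : @hom C X Y) (c : @hom C Y (@unit C)) => f >> c).

(* In a cartesian bicategory the homset C[X,I] is a meet-semilattice with top disc_X and meet
   copy_X;(c ⊗ d);λ_I. Every arrow is a lax comonoid morphism and the maps are the strict ones,
   so precomposition with a map preserves this structure, and disc and copy provide the
   projections and pairings that make Map(C) cartesian. Equality on Y is cocopy_Y;disc_Y and the
   existential quantifier along X ⊗ Y → X is precomposition with id_X ⊗ codisc_Y: the adjunctions
   disc ⊣ codisc and copy ⊣ cocopy and the Frobenius law give the elementary and existential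
   adjunctions and Beck–Chevalley. In a peircean bicategory C[X,I] is moreover Boolean with a
   negation commuting with maps, so maps also preserve bottom and joins (De Morgan), and
   Frobenius reciprocity follows from a = (a ∧ π*b) ∨ (a ∧ ¬π*b), since ∃ preserves joins
   and ∃(a ∧ π*¬b) ≤ ¬b. *)


Section BooleanAlgebra.
Context {T : Type} {le : T -> T -> Prop} {B : BoolOps T} (HB : is_boolean le B).
Local Notation "x <= y" := (le x y).
Local Notation top := (btop B).
Local Notation bot := (bbot B).
Local Notation meet := (bmeet B).
Local Notation join := (bjoin B).
Local Notation neg := (bneg B).

Lemma ble_refl x : x <= x. Proof. apply HB. Qed.
Lemma ble_trans x y z : x <= y -> y <= z -> x <= z. Proof. apply HB. Qed.
Lemma ble_antisym x y : x <= y -> y <= x -> x = y. Proof. apply HB. Qed.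
Lemma ble_top x : x <= top. Proof. apply HB. Qed.
Lemma ble_bot x : bot <= x. Proof. apply HB. Qed.
Lemma ble_meet x y z : z <= meet x y <-> z <= x /\ z <= y. Proof. apply HB. Qed.
Lemma bjoin_le x y z : join x y <= z <-> x <= z /\ y <= z. Proof. apply HB. Qed.
Lemma bmeet_joinr x y z : meet x (join y z) = join (meet x y) (meet x z). Proof. apply HB. Qed.
Lemma bmeet_neg x : meet x (neg x) = bot. Proof. apply HB. Qed.
Lemma bjoin_neg x : join x (neg x) = top. Proof. apply HB. Qed.

Lemma bmeet_le_l x y : meet x y <= x. Proof. apply (ble_meet x y), ble_refl. Qed.
Lemma bmeet_le_r x y : meet x y <= y. Proof. apply (ble_meet x y), ble_refl. Qed.
Lemma ble_join_l x y : x <= join x y. Proof. apply (bjoin_le x y), ble_refl. Qed.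
Lemma ble_join_r x y : y <= join x y. Proof. apply (bjoin_le x y), ble_refl. Qed.

Lemma bmeet_le2 x y x' y' : x <= x' -> y <= y' -> meet x y <= meet x' y'.
Proof.
  intros Hx Hy. apply ble_meet; split.
  - apply ble_trans with x; [apply bmeet_le_l | exact Hx].
  - apply ble_trans with y; [apply bmeet_le_r | exact Hy].
Qed.

Lemma bjoin_le2 x y x' y' : x <= x' -> y <= y' -> join x y <= join x' y'.
Proof.
  intros Hx Hy. apply bjoin_le; split.
  - apply ble_trans with x'; [exact Hx | apply ble_join_l].
  - apply ble_trans with y'; [exact Hy | apply ble_join_r].
Qed.

Lemma bmeetC x y : meet x y = meet y x.
Proof. apply ble_antisym; apply ble_meet; split; apply bmeet_le_r || apply bmeet_le_l. Qed.

Lemma bjoinC x y : join x y = join y x.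
Proof. apply ble_antisym; apply bjoin_le; split; apply ble_join_r || apply ble_join_l. Qed.

Lemma bmeet_top x : meet x top = x.
Proof.
  apply ble_antisym; [apply bmeet_le_l |].
  apply ble_meet; split; [apply ble_refl | apply ble_top].
Qed.

Lemma bjoin_bot x : join x bot = x.
Proof.
  apply ble_antisym; [| apply ble_join_l].
  apply bjoin_le; split; [apply ble_refl | apply ble_bot].
Qed.

Lemma ble_iff_eq x y : (forall z, x <= z <-> y <= z) -> x = y.
Proof. intros Hxy. apply ble_antisym; apply Hxy, ble_refl. Qed.

Lemma bjoin_meet_neg x y : join (meet x y) (meet x (neg y)) = x.
Proof. rewrite <- bmeet_joinr, bjoin_neg, bmeet_top. reflexivity. Qed.

Lemma bneg_unique x y : meet x y = bot -> join x y = top -> y = neg x.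
Proof.
  intros Hmeet Hjoin. apply ble_antisym.
  - rewrite <- (bjoin_meet_neg y x), bmeetC, Hmeet, bmeetC.
    apply bjoin_le; split; [apply ble_bot | apply bmeet_le_l].
  - rewrite <- (bmeet_top (neg x)), <- Hjoin, bmeet_joinr, bmeetC, bmeet_neg.
    apply bjoin_le; split; [apply ble_bot | apply bmeet_le_r].
Qed.

Lemma bnegK x : neg (neg x) = x.
Proof.
  symmetry. apply bneg_unique.
  - rewrite bmeetC. apply bmeet_neg.
  - rewrite bjoinC. apply bjoin_neg.
Qed.

Lemma bneg_top : neg top = bot.
Proof. rewrite <- (bmeet_neg top), bmeetC, bmeet_top. reflexivity. Qed.

Lemma bneg_join x y : neg (join x y) = meet (neg x) (neg y).
Proof.
  symmetry. apply bneg_unique.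
  - apply ble_antisym; [| apply ble_bot].
    rewrite bmeetC, bmeet_joinr. apply bjoin_le; split.
    + rewrite <- (bmeet_neg x). apply ble_meet; split; [apply bmeet_le_r |].
      apply ble_trans with (meet (neg x) (neg y)); apply bmeet_le_l.
    + rewrite <- (bmeet_neg y). apply ble_meet; split; [apply bmeet_le_r |].
      apply ble_trans with (meet (neg x) (neg y)); [apply bmeet_le_l | apply bmeet_le_r].
  - apply ble_antisym; [apply ble_top |].
    rewrite <- (bjoin_neg x). apply bjoin_le; split.
    + apply ble_trans with (join x y); apply ble_join_l.
    + apply ble_trans with (join (meet (neg x) y) (meet (neg x) (neg y))).
      { rewrite bjoin_meet_neg. apply ble_refl. }
      apply bjoin_le; split; [| apply ble_join_r].
      apply ble_trans with y; [apply bmeet_le_r |].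
      apply ble_trans with (join x y); [apply ble_join_r | apply ble_join_l].
Qed.

Lemma bjoin_neg_meet x y : join x y = neg (meet (neg x) (neg y)).
Proof. rewrite <- bneg_join, bnegK. reflexivity. Qed.

End BooleanAlgebra.

(* The laws are found by typeclass inference, so rewriting with them needs no proof argument. *)
Existing Class is_SMPCat.
Arguments le_refl {C _ X Y} f.
Arguments le_trans {C _ X Y} f g h.
Arguments le_antisym {C _ X Y} f g.
Arguments cmp_mono {C _ X Y Z} f f' g g'.
Arguments id_l {C _ X Y} f.
Arguments id_r {C _ X Y} f.
Arguments cmp_assoc {C _ X Y Z W} f g h.
Arguments tens_mono {C _ X X' Y Y'} f f' g g'.
Arguments tens_id {C _} X Y.
Arguments tens_cmp {C _ X X' X'' Y Y' Y''} f f' g g'.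
Arguments assoc_iso1 {C _} X Y Z.
Arguments assoc_iso2 {C _} X Y Z.
Arguments lunit_iso1 {C _} X.
Arguments lunit_iso2 {C _} X.
Arguments runit_iso1 {C _} X.
Arguments runit_iso2 {C _} X.
Arguments sym_inv {C _} X Y.
Arguments assoc_nat {C _ X X' Y Y' Z Z'} f g h.
Arguments lunit_nat {C _ X X'} f.
Arguments runit_nat {C _ X X'} f.
Arguments sym_nat {C _ X X' Y Y'} f g.

Section MonoidalPosetCategory.
Context {C : SMPData} `{is_SMPCat C}.
Implicit Types X Y Z W : ob C.

Lemma precmp_le {X Y Z} (f : hom X Y) (g g' : hom Y Z) : hle g g' -> hle (f >> g) (f >> g').
Proof. intros Hg. apply cmp_mono; [apply le_refl | exact Hg]. Qed.

Lemma postcmp_le {X Y Z} (f f' : hom X Y) (g : hom Y Z) : hle f f' -> hle (f >> g) (f' >> g).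
Proof. intros Hf. apply cmp_mono; [exact Hf | apply le_refl]. Qed.

Lemma inflationary_precmp {X Y} (u : hom X X) (h : hom X Y) : hle (idm X) u -> hle h (u >> h).
Proof.
  intros Hu. apply le_trans with (idm X >> h); [rewrite id_l; apply le_refl |].
  apply postcmp_le, Hu.
Qed.

Lemma deflationary_postcmp {X Y} (u : hom Y Y) (h : hom X Y) : hle u (idm Y) -> hle (h >> u) h.
Proof.
  intros Hu. apply le_trans with (h >> idm Y); [| rewrite id_r; apply le_refl].
  apply precmp_le, Hu.
Qed.

Lemma tens_cmp_l {X X' X'' Y Y'} (f : hom X X') (f' : hom X' X'') (g : hom Y Y') :
  (f >> f') ** g = (f ** idm Y) >> (f' ** g).
Proof. rewrite <- tens_cmp, id_l. reflexivity. Qed.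

Lemma tens_cmp_r {X X' Y Y' Y''} (f : hom X X') (g : hom Y Y') (g' : hom Y' Y'') :
  f ** (g >> g') = (idm X ** g) >> (f ** g').
Proof. rewrite <- tens_cmp, id_l. reflexivity. Qed.

Lemma tens_split_l {X X' Y Y'} (f : hom X X') (g : hom Y Y') :
  f ** g = (f ** idm Y) >> (idm X' ** g).
Proof. rewrite <- tens_cmp, id_l, id_r. reflexivity. Qed.

Lemma tens_split_r {X X' Y Y'} (f : hom X X') (g : hom Y Y') :
  f ** g = (idm X ** g) >> (f ** idm Y').
Proof. rewrite <- tens_cmp, id_l, id_r. reflexivity. Qed.

Lemma tens_cmpA {X X' X'' Y Y' Y'' V} (f : hom X X') (f' : hom X' X'')
  (g : hom Y Y') (g' : hom Y' Y'') (r : hom (tens X'' Y'') V) :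
  (f ** g) >> ((f' ** g') >> r) = ((f >> f') ** (g >> g')) >> r.
Proof. rewrite tens_cmp, cmp_assoc. reflexivity. Qed.

Lemma iso_nat_inv {X X' Y Y'} (i : hom X Y) (j : hom Y X) (i' : hom X' Y') (j' : hom Y' X')
  (a : hom X X') (b : hom Y Y') :
  j >> i = idm Y -> i' >> j' = idm X' -> a >> i' = i >> b -> b >> j' = j >> a.
Proof.
  intros Hji Hij' Hnat.
  transitivity ((j >> i) >> (b >> j')); [rewrite Hji, id_l; reflexivity |].
  rewrite cmp_assoc, <- (cmp_assoc i b j'), <- Hnat, cmp_assoc, Hij', id_r. reflexivity.
Qed.

Lemma assoc_inv_nat {X X' Y Y' Z Z'} (f : hom X X') (g : hom Y Y') (h : hom Z Z') :
  (f ** (g ** h)) >> assoc_inv X' Y' Z' = assoc_inv X Y Z >> ((f ** g) ** h).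
Proof. eapply iso_nat_inv; [apply assoc_iso2 | apply assoc_iso1 | apply assoc_nat]. Qed.

Lemma lunit_inv_nat {X X'} (f : hom X X') : f >> lunit_inv X' = lunit_inv X >> (idm unit ** f).
Proof. eapply iso_nat_inv; [apply lunit_iso2 | apply lunit_iso1 | apply lunit_nat]. Qed.

Lemma runit_inv_nat {X X'} (f : hom X X') : f >> runit_inv X' = runit_inv X >> (f ** idm unit).
Proof. eapply iso_nat_inv; [apply runit_iso2 | apply runit_iso1 | apply runit_nat]. Qed.

Lemma mid_nat {X X' Y Y' Z Z' W W'} (f : hom X X') (g : hom Y Y') (h : hom Z Z') (k : hom W W') :
  ((f ** g) ** (h ** k)) >> mid X' Y' Z' W' = mid X Y Z W >> ((f ** h) ** (g ** k)).
Proof.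
  unfold mid. rewrite !cmp_assoc.
  rewrite <- (cmp_assoc _ (assoc X' Y' (tens Z' W'))), assoc_nat, cmp_assoc. f_equal.
  rewrite tens_cmpA, id_r, assoc_inv_nat, tens_cmp_r, cmp_assoc. f_equal.
  rewrite tens_cmpA, id_r, <- tens_cmp, sym_nat, id_r, tens_cmp_l, tens_cmp_r, cmp_assoc. f_equal.
  rewrite tens_cmpA, id_r, assoc_nat, tens_cmp_r, cmp_assoc. f_equal.
  apply assoc_inv_nat.
Qed.

End MonoidalPosetCategory.

Existing Class is_CartBicat.
Arguments copy_assoc {C _} X.
Arguments copy_unit_l {C _} X.
Arguments copy_unit_r {C _} X.
Arguments cocopy_unit_l {C _} X.
Arguments frobenius_l {C _} X.
Arguments special {C _} X.
Arguments copy_tens {C _} X Y.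
Arguments disc_tens {C _} X Y.
Arguments copy_unit {C _}.
Arguments disc_unitob {C _}.
Arguments cocopy_tens {C _} X Y.
Arguments copy_lax {C _ X Y} c.
Arguments disc_lax {C _ X Y} c.
Arguments copy_adj1 {C _} X.
Arguments copy_adj2 {C _} X.
Arguments disc_adj1 {C _} X.
Arguments disc_adj2 {C _} X.

Section CartesianBicategory.
Context {C : CBData} `{is_SMPCat C} `{is_CartBicat C}.
Implicit Types X Y Z W V : ob C.

Lemma copy_unit_l_cmp {X Y} (h : hom X Y) : copy X >> ((disc X ** idm X) >> (lunit X >> h)) = h.
Proof. rewrite <- !cmp_assoc, copy_unit_l, id_l. reflexivity. Qed.

Lemma copy_unit_r_cmp {X Y} (h : hom X Y) : copy X >> ((idm X ** disc X) >> (runit X >> h)) = h.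
Proof. rewrite <- !cmp_assoc, copy_unit_r, id_l. reflexivity. Qed.

Lemma map_copy {X Y} (f : hom X Y) : is_map f -> copy X >> (f ** f) = f >> copy Y.
Proof. intros [Hcopy _]. apply le_antisym; [exact Hcopy | apply copy_lax]. Qed.

Lemma map_disc {X Y} (f : hom X Y) : is_map f -> f >> disc Y = disc X.
Proof. intros [_ Hdisc]. apply le_antisym; [apply disc_lax | exact Hdisc]. Qed.

Lemma map_copy_cmp {X Y V} (f : hom X Y) (r : hom (tens Y Y) V) : is_map f ->
  copy X >> ((f ** f) >> r) = f >> (copy Y >> r).
Proof. intros Hf. rewrite <- cmp_assoc, map_copy, cmp_assoc by exact Hf. reflexivity. Qed.

Lemma left_adjoint_map {X Y} (f : hom X Y) (g : hom Y X) :
  hle (idm X) (f >> g) -> hle (g >> f) (idm Y) -> is_map f.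
Proof.
  intros Hunit Hcounit. split.
  - apply le_trans with (f >> (g >> (copy X >> (f ** f)))).
    { rewrite <- cmp_assoc. apply inflationary_precmp, Hunit. }
    apply precmp_le. apply le_trans with (copy Y >> ((g ** g) >> (f ** f))).
    { rewrite <- !cmp_assoc. apply postcmp_le, copy_lax. }
    rewrite <- tens_cmp. apply deflationary_postcmp.
    rewrite <- tens_id. apply tens_mono; exact Hcounit.
  - apply le_trans with (f >> (g >> disc X)).
    { rewrite <- cmp_assoc. apply inflationary_precmp, Hunit. }
    apply precmp_le, disc_lax.
Qed.

Lemma iso_map {X Y} (f : hom X Y) (g : hom Y X) : f >> g = idm X -> g >> f = idm Y -> is_map f.
Proof.
  intros Hfg Hgf. apply (left_adjoint_map f g); [rewrite Hfg | rewrite Hgf]; apply le_refl.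
Qed.

Lemma map_id X : is_map (idm X).
Proof. apply (iso_map (idm X) (idm X)); apply id_l. Qed.

Lemma map_cmp {X Y Z} (f : hom X Y) (g : hom Y Z) : is_map f -> is_map g -> is_map (f >> g).
Proof.
  intros Hf Hg. split.
  - rewrite tens_cmp, <- cmp_assoc, map_copy, cmp_assoc, map_copy, cmp_assoc by assumption.
    apply le_refl.
  - rewrite cmp_assoc, !map_disc by assumption. apply le_refl.
Qed.

Lemma map_tens {X X' Y Y'} (f : hom X X') (g : hom Y Y') : is_map f -> is_map g -> is_map (f ** g).
Proof.
  intros Hf Hg. split.
  - rewrite copy_tens, cmp_assoc, <- mid_nat, <- cmp_assoc, <- tens_cmp, !map_copy, tens_cmp,
      cmp_assoc, <- copy_tens by assumption.
    apply le_refl.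
  - rewrite !disc_tens, <- cmp_assoc, <- tens_cmp, !map_disc by assumption. apply le_refl.
Qed.

Lemma copy_map X : is_map (copy X).
Proof. exact (left_adjoint_map _ _ (copy_adj1 X) (copy_adj2 X)). Qed.

Lemma disc_map X : is_map (disc X).
Proof. exact (left_adjoint_map _ _ (disc_adj1 X) (disc_adj2 X)). Qed.

Lemma lunit_map X : is_map (lunit X).
Proof. exact (iso_map _ _ (lunit_iso1 X) (lunit_iso2 X)). Qed.

Lemma runit_map X : is_map (runit X).
Proof. exact (iso_map _ _ (runit_iso1 X) (runit_iso2 X)). Qed.

Lemma sym_map X Y : is_map (sym X Y).
Proof. exact (iso_map _ _ (sym_inv X Y) (sym_inv Y X)). Qed.

Lemma le_disc {X} (c : hom X unit) : hle c (disc X).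
Proof. rewrite <- (id_r c), <- disc_unitob. apply disc_lax. Qed.

Lemma map_to_unit {X} (f : hom X unit) : is_map f -> f = disc X.
Proof.
  intros [_ Hdisc]. rewrite disc_unitob, id_r in Hdisc.
  apply le_antisym; [apply le_disc | exact Hdisc].
Qed.

Lemma lunit_runit_unit : lunit (@unit C) = runit unit.
Proof. rewrite (map_to_unit _ (lunit_map unit)), (map_to_unit _ (runit_map unit)). reflexivity. Qed.

Lemma sym_unit : sym (@unit C) unit = idm _.
Proof.
  assert (Hsym : sym (@unit C) unit >> lunit unit = lunit unit).
  { rewrite (map_to_unit _ (map_cmp _ _ (sym_map unit unit) (lunit_map unit))).
    symmetry. apply map_to_unit, lunit_map. }
  rewrite <- (id_r (sym unit unit)), <- lunit_iso1, <- cmp_assoc, Hsym. reflexivity.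
Qed.

Lemma mid_unit X Y : mid X unit unit Y = idm _.
Proof.
  unfold mid. rewrite sym_unit, !tens_id, id_r, !cmp_assoc, tens_cmpA, id_l, assoc_iso2, tens_id,
    id_l, assoc_iso1.
  reflexivity.
Qed.

(* These are the projections and pairing of [MapFP]. *)
Definition pfst X Y : hom (tens X Y) X := (idm X ** disc Y) >> runit X.
Definition psnd X Y : hom (tens X Y) Y := (disc X ** idm Y) >> lunit Y.
Definition pairing {Z X Y} (f : hom Z X) (g : hom Z Y) : hom Z (tens X Y) := copy Z >> (f ** g).

Lemma pfst_map X Y : is_map (pfst X Y).
Proof. apply map_cmp; [apply map_tens; [apply map_id | apply disc_map] | apply runit_map]. Qed.

Lemma psnd_map X Y : is_map (psnd X Y).
Proof. apply map_cmp; [apply map_tens; [apply disc_map | apply map_id] | apply lunit_map]. Qed.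

Lemma pairing_map {Z X Y} (f : hom Z X) (g : hom Z Y) :
  is_map f -> is_map g -> is_map (pairing f g).
Proof. intros Hf Hg. apply map_cmp; [apply copy_map | apply map_tens; assumption]. Qed.

Lemma pairing_fst {Z X Y} (f : hom Z X) (g : hom Z Y) : is_map g -> pairing f g >> pfst X Y = f.
Proof.
  intros Hg. unfold pairing, pfst.
  rewrite cmp_assoc, tens_cmpA, id_r, map_disc, tens_split_r, cmp_assoc, runit_nat by exact Hg.
  apply copy_unit_r_cmp.
Qed.

Lemma pairing_snd {Z X Y} (f : hom Z X) (g : hom Z Y) : is_map f -> pairing f g >> psnd X Y = g.
Proof.
  intros Hf. unfold pairing, psnd.
  rewrite cmp_assoc, tens_cmpA, id_r, map_disc, tens_split_l, cmp_assoc, lunit_nat by exact Hf.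
  apply copy_unit_l_cmp.
Qed.

Lemma map_cmp_pairing {W Z X Y} (h : hom W Z) (f : hom Z X) (g : hom Z Y) : is_map h ->
  h >> pairing f g = pairing (h >> f) (h >> g).
Proof. intros Hh. unfold pairing. rewrite tens_cmp, <- map_copy_cmp by exact Hh. reflexivity. Qed.

Lemma pairing_fst_snd X Y : pairing (pfst X Y) (psnd X Y) = idm _.
Proof.
  unfold pairing, pfst, psnd.
  rewrite copy_tens, tens_cmp, cmp_assoc, <- (cmp_assoc (mid X X Y Y)), <- mid_nat, mid_unit, id_r,
    tens_cmpA, <- tens_cmp, copy_unit_r, copy_unit_l.
  apply tens_id.
Qed.

Lemma pairing_eta {Z X Y} (h : hom Z (tens X Y)) : is_map h ->
  h = pairing (h >> pfst X Y) (h >> psnd X Y).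
Proof. intros Hh. rewrite <- map_cmp_pairing, pairing_fst_snd, id_r by exact Hh. reflexivity. Qed.

Lemma tens_id_pfst {X X' Y} (f : hom X' X) : (f ** idm Y) >> pfst X Y = pfst X' Y >> f.
Proof.
  unfold pfst. rewrite cmp_assoc, <- runit_nat, tens_cmpA, <- cmp_assoc, <- tens_cmp, !id_l, !id_r.
  reflexivity.
Qed.

Lemma tens_id_psnd {X X' Y} (f : hom X' X) : is_map f -> (f ** idm Y) >> psnd X Y = psnd X' Y.
Proof. intros Hf. unfold psnd. rewrite tens_cmpA, map_disc, id_l by exact Hf. reflexivity. Qed.

Lemma tens_id_pairing {X X' Y} (f : hom X' X) : is_map f ->
  f ** idm Y = pairing (pfst X' Y >> f) (psnd X' Y).
Proof.
  intros Hf. rewrite (pairing_eta _ (map_tens _ _ Hf (map_id Y))), tens_id_pfst, tens_id_psnd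
    by exact Hf.
  reflexivity.
Qed.

Definition hmeet {X} (c d : hom X unit) : hom X unit := copy X >> ((c ** d) >> lunit unit).

Lemma hmeet_le_l {X} (c d : hom X unit) : hle (hmeet c d) c.
Proof.
  unfold hmeet. rewrite lunit_runit_unit.
  apply le_trans with (copy X >> ((c ** disc X) >> runit unit)).
  - apply precmp_le, postcmp_le, tens_mono; [apply le_refl | apply le_disc].
  - rewrite tens_split_r, cmp_assoc, runit_nat, copy_unit_r_cmp. apply le_refl.
Qed.

Lemma hmeet_le_r {X} (c d : hom X unit) : hle (hmeet c d) d.
Proof.
  unfold hmeet. apply le_trans with (copy X >> ((disc X ** d) >> lunit unit)).
  - apply precmp_le, postcmp_le, tens_mono; [apply le_disc | apply le_refl].
  - rewrite tens_split_l, cmp_assoc, lunit_nat, copy_unit_l_cmp. apply le_refl.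
Qed.

Lemma hmeet_le2 {X} (c d c' d' : hom X unit) :
  hle c c' -> hle d d' -> hle (hmeet c d) (hmeet c' d').
Proof. intros Hc Hd. apply precmp_le, postcmp_le, tens_mono; assumption. Qed.

Lemma hmeet_glb {X} (c d e : hom X unit) : hle e c -> hle e d -> hle e (hmeet c d).
Proof.
  intros Hc Hd. apply le_trans with (hmeet e e); [| apply hmeet_le2; assumption].
  apply le_trans with ((e >> copy unit) >> lunit unit).
  - rewrite copy_unit, cmp_assoc, lunit_iso2, id_r. apply le_refl.
  - unfold hmeet. rewrite <- cmp_assoc. apply postcmp_le, copy_lax.
Qed.

Lemma hmeet_disc_l {X} (c : hom X unit) : hmeet (disc X) c = c.
Proof.
  apply le_antisym; [apply hmeet_le_r |].
  apply hmeet_glb; [apply le_disc | apply le_refl].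
Qed.

Lemma hmeet_disc_r {X} (c : hom X unit) : hmeet c (disc X) = c.
Proof.
  apply le_antisym; [apply hmeet_le_l |].
  apply hmeet_glb; [apply le_refl | apply le_disc].
Qed.

Lemma map_cmp_hmeet {X Y} (f : hom X Y) (c d : hom Y unit) : is_map f ->
  f >> hmeet c d = hmeet (f >> c) (f >> d).
Proof. intros Hf. unfold hmeet. rewrite <- map_copy_cmp, tens_cmpA by exact Hf. reflexivity. Qed.

Definition eqrel Y : hom (tens Y Y) unit := cocopy Y >> disc Y.

Lemma eqrel_tens Z Y : eqrel (tens Z Y) = mid Z Y Z Y >> ((eqrel Z ** eqrel Y) >> lunit unit).
Proof. unfold eqrel. rewrite cocopy_tens, disc_tens, cmp_assoc, tens_cmpA. reflexivity. Qed.

Lemma pairing_eqrel_diag {X Y} (f : hom X Y) : is_map f -> pairing f f >> eqrel Y = disc X.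
Proof.
  intros Hf. unfold pairing, eqrel.
  rewrite cmp_assoc, map_copy_cmp, <- (cmp_assoc (copy Y)), special, id_l, map_disc by exact Hf.
  reflexivity.
Qed.

Lemma pairing_pairing_mid {W X Y X' Y'} (a : hom W X) (b : hom W Y) (c : hom W X') (d : hom W Y') :
  pairing (pairing a b) (pairing c d) >> mid X Y X' Y' = pairing (pairing a c) (pairing b d).
Proof.
  unfold pairing.
  rewrite !tens_cmp, !cmp_assoc, mid_nat, <- (cmp_assoc (copy W ** copy W)), <- copy_tens,
    <- (cmp_assoc (copy W)), <- (map_copy _ (copy_map W)).
  rewrite !cmp_assoc. reflexivity.
Qed.

Lemma pairing_eqrel_tens {W Z Y} (h : hom W Z) (f g : hom W Y) : is_map h ->
  pairing (pairing h f) (pairing h g) >> eqrel (tens Z Y) = pairing f g >> eqrel Y.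
Proof.
  intros Hh. rewrite eqrel_tens, <- cmp_assoc, pairing_pairing_mid.
  unfold pairing at 1. rewrite cmp_assoc, tens_cmpA.
  change (hmeet (pairing h h >> eqrel Z) (pairing f g >> eqrel Y) = pairing f g >> eqrel Y).
  rewrite pairing_eqrel_diag by exact Hh. apply hmeet_disc_l.
Qed.

Lemma frobenius_eqrel {V} (b : hom V unit) :
  (copy V ** idm V) >> (assoc V V V >> ((b ** eqrel V) >> lunit unit)) = cocopy V >> b.
Proof.
  unfold eqrel. rewrite tens_cmp_r, <- !cmp_assoc, frobenius_l, !cmp_assoc, lunit_runit_unit,
    tens_split_r, cmp_assoc, runit_nat, copy_unit_r_cmp.
  reflexivity.
Qed.

Lemma hmeet_eqrel {W V} (f g : hom W V) (b : hom V unit) : is_map f ->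
  hmeet (f >> b) (pairing f g >> eqrel V) = (pairing f g >> cocopy V) >> b.
Proof.
  intros Hf. unfold hmeet, pairing.
  transitivity
    (copy W >> ((idm W ** copy W) >> ((f ** (f ** g)) >> ((b ** eqrel V) >> lunit unit)))).
  { rewrite !tens_cmpA, id_l, !cmp_assoc. reflexivity. }
  rewrite <- (cmp_assoc (copy W) (idm W ** copy W)), <- copy_assoc, !cmp_assoc,
    <- (cmp_assoc (assoc W W W)), <- assoc_nat, cmp_assoc, tens_cmpA, map_copy by exact Hf.
  replace ((f >> copy V) ** (idm W >> g)) with ((f ** g) >> (copy V ** idm V))
    by (rewrite <- tens_cmp, id_l, id_r; reflexivity).
  rewrite cmp_assoc, frobenius_eqrel. reflexivity.
Qed.

Lemma le_disc_codisc {X Y} (f : hom X Y) : hle f (disc X >> codisc Y).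
Proof.
  apply le_trans with (f >> (disc Y >> codisc Y)).
  - apply le_trans with (f >> idm Y); [rewrite id_r; apply le_refl |].
    apply precmp_le, disc_adj1.
  - rewrite <- cmp_assoc. apply postcmp_le, disc_lax.
Qed.

Lemma pairing_cmp_tens {Z X Y X' Y'} (f : hom Z X) (g : hom Z Y) (h : hom X X') (k : hom Y Y') :
  pairing f g >> (h ** k) = pairing (f >> h) (g >> k).
Proof. unfold pairing. rewrite cmp_assoc, <- tens_cmp. reflexivity. Qed.

Lemma pairing_disc_l {X Y} (g : hom X Y) : pairing (disc X) g = g >> lunit_inv Y.
Proof.
  assert (Hcopy : copy X >> (disc X ** idm X) = lunit_inv X).
  { rewrite <- (id_r (copy X >> _)), <- lunit_iso1, <- cmp_assoc, copy_unit_l, id_l. reflexivity. }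
  unfold pairing. rewrite tens_split_l, <- cmp_assoc, Hcopy, lunit_inv_nat. reflexivity.
Qed.

Lemma pairing_cocopy_le {X Y} (f g : hom X Y) : hle (pairing f g >> cocopy Y) g.
Proof.
  apply le_trans with (pairing (disc X >> codisc Y) g >> cocopy Y).
  { apply postcmp_le, precmp_le, tens_mono; [apply le_disc_codisc | apply le_refl]. }
  replace (pairing (disc X >> codisc Y) g) with (pairing (disc X) g >> (codisc Y ** idm Y))
    by (rewrite pairing_cmp_tens, id_r; reflexivity).
  rewrite pairing_disc_l, !cmp_assoc, <- (cmp_assoc (lunit_inv Y)), cocopy_unit_l, id_r.
  apply le_refl.
Qed.

Lemma eqrel_subst {X Y} (f g : hom X Y) (b : hom Y unit) : is_map f ->
  hle (hmeet (f >> b) (pairing f g >> eqrel Y)) (g >> b).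
Proof. intros Hf. rewrite hmeet_eqrel by exact Hf. apply postcmp_le, pairing_cocopy_le. Qed.

Lemma elementary_hmeet {X Y} (a : hom (tens X Y) unit) (b : hom (tens (tens X Y) Y) unit) :
  hle (hmeet (pfst (tens X Y) Y >> a)
             (pairing (pfst (tens X Y) Y >> psnd X Y) (psnd (tens X Y) Y) >> eqrel Y)) b
  <-> hle a (pairing (idm (tens X Y)) (psnd X Y) >> b).
Proof.
  set (p := pfst (tens X Y) Y). set (q := psnd (tens X Y) Y). set (s := psnd X Y).
  set (d := pairing (idm (tens X Y)) s).
  assert (Hp : is_map p) by apply pfst_map.
  assert (Hs : is_map s) by apply psnd_map.
  assert (Hd : is_map d) by (apply pairing_map; [apply map_id | exact Hs]).
  assert (Hdp : d >> p = idm _) by (apply pairing_fst, Hs).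
  assert (Hdq : d >> q = s) by (apply pairing_snd, map_id).
  split; intro Hle.
  - apply le_trans with (d >> hmeet (p >> a) (pairing (p >> s) q >> eqrel Y));
      [| apply precmp_le, Hle].
    rewrite map_cmp_hmeet, <- !cmp_assoc, Hdp, id_l, map_cmp_pairing, <- cmp_assoc, Hdp, id_l
      by exact Hd.
    rewrite Hdq, pairing_eqrel_diag, hmeet_disc_r by exact Hs. apply le_refl.
  - assert (Hpd : p >> d = pairing p (p >> s))
      by (unfold d; rewrite map_cmp_pairing, id_r by exact Hp; reflexivity).
    apply le_trans with (hmeet (p >> (d >> b)) (pairing (p >> s) q >> eqrel Y));
      [apply hmeet_le2; [apply precmp_le, Hle | apply le_refl] |].
    rewrite <- cmp_assoc, Hpd, <- (pairing_eqrel_tens p) by exact Hp.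
    apply le_trans with (pairing p q >> b).
    + apply eqrel_subst, pairing_map; [exact Hp | apply map_cmp; assumption].
    + unfold p, q. rewrite pairing_fst_snd, id_l. apply le_refl.
Qed.

Definition exists_fst {X Y} (a : hom (tens X Y) unit) : hom X unit :=
  runit_inv X >> ((idm X ** codisc Y) >> a).

Lemma exists_fst_le {X Y} (a a' : hom (tens X Y) unit) :
  hle a a' -> hle (exists_fst a) (exists_fst a').
Proof. intros Ha. apply precmp_le, precmp_le, Ha. Qed.

Lemma le_pfst_exists_fst {X Y} (a : hom (tens X Y) unit) : hle a (pfst X Y >> exists_fst a).
Proof.
  unfold pfst, exists_fst.
  rewrite cmp_assoc, <- (cmp_assoc (runit X)), runit_iso1, id_l, <- cmp_assoc, <- tens_cmp, id_l.
  apply inflationary_precmp.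
  rewrite <- tens_id. apply tens_mono; [apply le_refl | apply disc_adj1].
Qed.

Lemma exists_fst_pfst_le {X Y} (b : hom X unit) : hle (exists_fst (pfst X Y >> b)) b.
Proof.
  unfold pfst, exists_fst.
  rewrite (cmp_assoc (idm X ** disc Y)), <- (cmp_assoc (idm X ** codisc Y)), <- tens_cmp, id_l.
  apply le_trans with (runit_inv X >> (idm _ >> (runit X >> b))).
  - apply precmp_le, postcmp_le.
    rewrite <- tens_id. apply tens_mono; [apply le_refl | apply disc_adj2].
  - rewrite id_l, <- cmp_assoc, runit_iso2, id_l. apply le_refl.
Qed.

Lemma exists_fst_adj {X Y} (a : hom (tens X Y) unit) (b : hom X unit) :
  hle (exists_fst a) b <-> hle a (pfst X Y >> b).
Proof.
  split; intro Hle.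
  - apply le_trans with (pfst X Y >> exists_fst a); [apply le_pfst_exists_fst |].
    apply precmp_le, Hle.
  - apply le_trans with (exists_fst (pfst X Y >> b)); [apply exists_fst_le, Hle |].
    apply exists_fst_pfst_le.
Qed.

Lemma map_cmp_exists_fst {X X' Y} (f : hom X' X) (a : hom (tens X Y) unit) : is_map f ->
  f >> exists_fst a = exists_fst (pairing (pfst X' Y >> f) (psnd X' Y) >> a).
Proof.
  intros Hf. unfold exists_fst. rewrite <- tens_id_pairing by exact Hf.
  rewrite <- cmp_assoc, runit_inv_nat, cmp_assoc, !tens_cmpA, !id_l, !id_r. reflexivity.
Qed.

End CartesianBicategory.

Lemma map_fp_cat (C : PBData) `{is_SMPCat C} `{is_CartBicat C} : is_fp_cat (MapFP C).
Proof.
  unfold is_fp_cat; cbn.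
  refine (conj _ (conj _ (conj _ (conj _ (conj _ (conj _ (conj _ (conj _ _)))))))).
  - exact map_id.
  - intros X Y Z f g. exact (map_cmp f g).
  - intros X Y f _. split; [apply id_l | apply id_r].
  - intros X Y Z W f g h _ _ _. apply cmp_assoc.
  - intros X Y. split; [apply pfst_map | apply psnd_map].
  - intros Z X Y f g Hf Hg.
    split; [| split]; [apply pairing_map | apply pairing_fst | apply pairing_snd]; assumption.
  - intros Z X Y h Hh. apply pairing_eta, Hh.
  - exact disc_map.
  - intros X h Hh. apply map_to_unit, Hh.
Qed.

#[export] Instance PeirceanBicat_SMPCat (C : PeirceanBicat) : is_SMPCat C := pb_smc C.
#[export] Instance PeirceanBicat_CartBicat (C : PeirceanBicat) : is_CartBicat C := pb_cb C.

Section PeirceanBicategory.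
Variable C : PeirceanBicat.
Implicit Types X Y Z : ob C.

Lemma homI_boolean X : is_boolean (@hle C X unit) (bops X unit).
Proof. apply (proj1 (pb_peirce C)). Qed.

Lemma map_cmp_bneg {X Y Z} (f : hom X Y) (c : hom Y Z) :
  is_map f -> f >> bneg (bops Y Z) c = bneg (bops X Z) (f >> c).
Proof. apply (proj2 (pb_peirce C)). Qed.

Lemma btop_disc X : btop (bops X unit) = disc X.
Proof. apply le_antisym; [apply le_disc | apply (ble_top (homI_boolean X))]. Qed.

Lemma bmeet_hmeet {X} (c d : hom X unit) : bmeet (bops X unit) c d = hmeet c d.
Proof.
  pose proof (homI_boolean X) as HB. apply le_antisym.
  - apply hmeet_glb; [apply (bmeet_le_l HB) | apply (bmeet_le_r HB)].
  - apply (ble_meet HB); split; [apply hmeet_le_l | apply hmeet_le_r].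
Qed.

Lemma map_cmp_btop {X Y} (f : hom X Y) :
  is_map f -> f >> btop (bops Y unit) = btop (bops X unit).
Proof. intros Hf. rewrite !btop_disc. apply map_disc, Hf. Qed.

Lemma map_cmp_bmeet {X Y} (f : hom X Y) (c d : hom Y unit) : is_map f ->
  f >> bmeet (bops Y unit) c d = bmeet (bops X unit) (f >> c) (f >> d).
Proof. intros Hf. rewrite !bmeet_hmeet. apply map_cmp_hmeet, Hf. Qed.

Lemma map_cmp_bbot {X Y} (f : hom X Y) :
  is_map f -> f >> bbot (bops Y unit) = bbot (bops X unit).
Proof.
  intros Hf.
  rewrite <- (bneg_top (homI_boolean Y)), map_cmp_bneg, map_cmp_btop, (bneg_top (homI_boolean X))
    by exact Hf.
  reflexivity.
Qed.

Lemma map_cmp_bjoin {X Y} (f : hom X Y) (c d : hom Y unit) : is_map f ->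
  f >> bjoin (bops Y unit) c d = bjoin (bops X unit) (f >> c) (f >> d).
Proof.
  intros Hf.
  rewrite (bjoin_neg_meet (homI_boolean Y)), (bjoin_neg_meet (homI_boolean X)), map_cmp_bneg,
    map_cmp_bmeet, !map_cmp_bneg by exact Hf.
  reflexivity.
Qed.

Lemma exists_fst_bjoin {X Y} (a a' : hom (tens X Y) unit) :
  exists_fst (bjoin (bops _ unit) a a') = bjoin (bops X unit) (exists_fst a) (exists_fst a').
Proof.
  apply (ble_iff_eq (homI_boolean X)). intros b.
  pose proof (exists_fst_adj (bjoin (bops _ unit) a a') b).
  pose proof (exists_fst_adj a b). pose proof (exists_fst_adj a' b).
  pose proof (bjoin_le (homI_boolean _) a a' (pfst X Y >> b)).
  pose proof (bjoin_le (homI_boolean X) (exists_fst a) (exists_fst a') b).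
  tauto.
Qed.

Lemma exists_fst_frobenius {X Y} (a : hom (tens X Y) unit) (b : hom X unit) :
  exists_fst (bmeet (bops _ unit) a (pfst X Y >> b)) = bmeet (bops X unit) (exists_fst a) b.
Proof.
  pose proof (homI_boolean X) as HX. pose proof (homI_boolean (tens X Y)) as HXY.
  set (m := bmeet (bops _ unit) a (pfst X Y >> b)).
  apply le_antisym.
  - apply (ble_meet HX); split.
    + apply exists_fst_le, (bmeet_le_l HXY).
    + apply exists_fst_adj, (bmeet_le_r HXY).
  - assert (Hsplit :
      hle (exists_fst a) (bjoin (bops X unit) (exists_fst m) (bneg (bops X unit) b))).
    { rewrite <- (bjoin_meet_neg HXY a (pfst X Y >> b)), exists_fst_bjoin.
      apply (bjoin_le2 HX); [apply le_refl |].
      apply exists_fst_adj. rewrite map_cmp_bneg by apply pfst_map. apply (bmeet_le_r HXY). }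
    apply le_trans
      with (bmeet (bops X unit) (bjoin (bops X unit) (exists_fst m) (bneg (bops X unit) b)) b).
    + apply (bmeet_le2 HX); [exact Hsplit | apply le_refl].
    + rewrite (bmeetC HX), (bmeet_joinr HX), (bmeet_neg HX), (bjoin_bot HX). apply (bmeet_le_r HX).
Qed.

Lemma homI_infsl_functor : is_infsl_functor (HomIDoc C).
Proof.
  unfold is_infsl_functor; cbn. split; [| split; [| split]].
  - intros X. pose proof (homI_boolean X) as HB.
    split; [| split; [| split; [| split]]].
    + apply (ble_refl HB).
    + apply (ble_trans HB).
    + apply (ble_antisym HB).
    + apply (ble_top HB).
    + apply (ble_meet HB).
  - intros X Y f Hf. split; [apply map_cmp_btop, Hf | intros; apply map_cmp_bmeet, Hf].
  - intros X a. apply id_l.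
  - intros X Y Z f g a _ _. apply cmp_assoc.
Qed.

Lemma homI_elementary : is_elementary (HomIDoc C).
Proof.
  intros Y. exists (eqrel Y). intros X a b. cbn.
  rewrite bmeet_hmeet. apply elementary_hmeet.
Qed.

Lemma homI_existential : is_existential (HomIDoc C).
Proof.
  exists (fun X Y a => exists_fst a). intros X Y. cbn.
  split; [| split].
  - apply exists_fst_adj.
  - apply exists_fst_frobenius.
  - intros X' f a Hf. apply map_cmp_exists_fst, Hf.
Qed.

Lemma homI_boolean_doctrine : is_boolean_doctrine (HomIDoc C).
Proof.
  split; [exact homI_boolean |].
  intros X Y f Hf. cbn.
  split; [| split; [| split; [| split]]]; intros;
    [apply map_cmp_btop | apply map_cmp_bbot | apply map_cmp_bmeet | apply map_cmp_bjoin
    | apply map_cmp_bneg]; exact Hf.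
Qed.

End PeirceanBicategory.

Theorem proposition27 (C : PeirceanBicat) :
  is_boolean_hyperdoctrine (HomIDoc C).
Proof.
  split; [exact (map_fp_cat C) |].
  split; [exact (homI_infsl_functor C) |].
  split; [exact (homI_elementary C) |].
  split; [exact (homI_existential C) | exact (homI_boolean_doctrine C)].
Qed.
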